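(* Define \[ \nu_1(z;q):=\sum_{n=0}^{\infty} \frac{z^n q^{n^2+n}}{(-q;q^2)_{n+1}}. \] Then, as formal power series in $q$ whose coefficients are polynomials in $z$ (equivalently, for $|q|<1$ and $z$ in a suitable region of convergence), \[ \nu_1(z;q)=\sum_{n=0}^{\infty} (zq;q^2)_n\,(-q)^n . \]
   Context: For $a$ and $q$, $(a;q)_0:=1$, $(a;q)_n:=(1-a)(1-aq)\cdots(1-aq^{n-1})$ for $n\ge1$. *)

(* Formal power series in q with coefficients in Z[z] are
   handled through their truncations modulo q^N, represented as elements of
   {poly {poly int}} (outer variable q, inner variable z). *)
From mathcomp Require Import all_boot all_order all_algebra.
Set Implicit Arguments. Unset Strict Implicit. Unset Printing Implicit Defensive.
Import Order.TTheory GRing.Theory Num.Theory.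
Local Open Scope ring_scope.

Notation ZzQ := {poly {poly int}}.

Definition qv : ZzQ := 'X.
Definition zv : ZzQ := ('X : {poly int})%:P.

Definition qpoch (a q : ZzQ) (n : nat) : ZzQ := \prod_(i < n) (1 - a * q ^+ i).

Definition trunc (N : nat) (p : ZzQ) : ZzQ := \poly_(i < N) p`_i.

(* inverse modulo q^N of a power series p with p(0) = 1:
   1/p = sum_j (1-p)^j, truncated *)
Definition inv_trunc (N : nat) (p : ZzQ) : ZzQ :=
  trunc N (\sum_(j < N) (1 - p) ^+ j).

(* nu_1(z;q) modulo q^N.  Terms with n >= N are divisible by q^(n^2+n),
   hence by q^N, so they are omitted. *)
Definition nu1_trunc (N : nat) : ZzQ :=
  trunc N (\sum_(n < N) zv ^+ n * qv ^+ (n * n + n)%N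
                         * inv_trunc N (qpoch (- qv) (qv ^+ 2) n.+1)).

(* sum_{n>=0} (zq;q^2)_n (-q)^n modulo q^N.  Terms with n >= N are divisible
   by q^n, hence by q^N, so they are omitted. *)
Definition rhs_trunc (N : nat) : ZzQ :=
  trunc N (\sum_(n < N) qpoch (zv * qv) (qv ^+ 2) n * (- qv) ^+ n).

(* Both sides satisfy the functional equation F(z) = 1 - q (1 - zq) F(zq^2),
   and modulo q^N this equation determines F by induction on N, because its
   right-hand side only involves F multiplied by q.  For the right-hand side
   this is the recursion (zq;q^2)_(n+1) = (1 - zq) (zq^3;q^2)_n.  For nu_1 it
   is a telescoping sum: with (-q;q^2)_(n+1) = (-q;q^2)_n (1 + q^(2n+1)), the
   n-th terms of nu_1(z) + q nu_1(zq^2) and of zq^2 nu_1(zq^2) cancel against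
   each other with a shift of one. *)
From mathcomp Require Import all_boot all_order all_algebra.
From mathcomp Require Import ring zify.
Set Implicit Arguments. Unset Strict Implicit. Unset Printing Implicit Defensive.
Import GRing.Theory.
Local Open Scope ring_scope.

Section CongruenceModXn.

Variable R : comNzRingType.
Implicit Types (p r s t : {poly R}) (K N : nat).

Definition eqmodX K p r := exists c, p - r = 'X^K * c.

Lemma eqmodX0 p r : eqmodX 0 p r.
Proof. by exists (p - r); rewrite expr0 mul1r. Qed.

Lemma eqmodX_refl K p : eqmodX K p p.
Proof. by exists 0; rewrite subrr mulr0. Qed.

Lemma eqmodX_sym K p r : eqmodX K p r -> eqmodX K r p.
Proof. by case=> c e; exists (- c); rewrite mulrN -e opprB. Qed.

Lemma eqmodX_trans K p r s : eqmodX K p r -> eqmodX K r s -> eqmodX K p s.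
Proof.
by case=> c e [d e']; exists (c + d); rewrite mulrDr -e -e' addrA subrK.
Qed.

Lemma eqmodXD K p r s t :
  eqmodX K p r -> eqmodX K s t -> eqmodX K (p + s) (r + t).
Proof. by case=> c e [d e']; exists (c + d); rewrite mulrDr -e -e'; ring. Qed.

Lemma eqmodXN K p r : eqmodX K p r -> eqmodX K (- p) (- r).
Proof. by case=> c e; exists (- c); rewrite mulrN -e; ring. Qed.

Lemma eqmodXB K p r s t :
  eqmodX K p r -> eqmodX K s t -> eqmodX K (p - s) (r - t).
Proof. by move=> epr est; apply/eqmodXD/eqmodXN. Qed.

Lemma eqmodXM K p r s t :
  eqmodX K p r -> eqmodX K s t -> eqmodX K (p * s) (r * t).
Proof.
case=> c e [d e']; exists (c * s + r * d).
by rewrite mulrDr mulrA -e mulrCA -e'; ring.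
Qed.

Lemma eqmodXMl K p r s : eqmodX K p r -> eqmodX K (s * p) (s * r).
Proof. exact/eqmodXM/eqmodX_refl. Qed.

Lemma eqmodX_prod K n (F G : 'I_n -> {poly R}) :
  (forall i, eqmodX K (F i) (G i)) -> eqmodX K (\prod_i F i) (\prod_i G i).
Proof.
move=> eFG; elim/big_rec2: _ => [|i x y _]; first exact: eqmodX_refl.
exact: eqmodXM.
Qed.

Lemma eqmodX_le N K p r : (N <= K)%N -> eqmodX K p r -> eqmodX N p r.
Proof.
by move=> leNK [c e]; exists ('X^(K - N) * c); rewrite e mulrA -exprD subnKC.
Qed.

Lemma eqmodX_mulXn K n p : (K <= n)%N -> eqmodX K ('X^n * p) 0.
Proof. by move=> leKn; apply: (eqmodX_le leKn); exists p; rewrite subr0. Qed.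

Lemma eqmodX_mulX K p r : eqmodX K p r -> eqmodX K.+1 ('X * p) ('X * r).
Proof. by case=> c e; exists c; rewrite -mulrBr e exprS mulrA. Qed.

Lemma eqmodX_rmorph (f : {rmorphism {poly R} -> {poly R}}) K p r :
  f 'X = 'X -> eqmodX K p r -> eqmodX K (f p) (f r).
Proof.
by move=> fX [c e]; exists (f c); rewrite -rmorphB e rmorphM rmorphXn fX.
Qed.

Lemma eqmodX_take K p : eqmodX K (take_poly K p) p.
Proof.
by exists (- drop_poly K p); rewrite -{2}(poly_take_drop K p); ring.
Qed.

Lemma take_poly_eqmodX K p r : eqmodX K p r -> take_poly K p = take_poly K r.
Proof.
case=> c e; have -> : p = r + c * 'X^K by rewrite mulrC -e; ring.
by rewrite take_polyD take_polyMXn_0 addr0.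
Qed.

(* (sum_(j < K) (1 - p)^j) p = 1 - (1 - p)^K, and X divides 1 - p. *)
Lemma eqmodX_inv K p :
  eqmodX 1 p 1 -> eqmodX K (take_poly K (\sum_(j < K) (1 - p) ^+ j) * p) 1.
Proof.
case=> c; rewrite expr1 => ep.
apply: (@eqmodX_trans _ _ ((\sum_(j < K) (1 - p) ^+ j) * p)).
  exact/eqmodXM/eqmodX_refl/eqmodX_take.
have -> : (\sum_(j < K) (1 - p) ^+ j) * p = 1 - (1 - p) ^+ K.
  have := subrX1 (1 - p) K; rewrite [1 - p - 1](_ : _ = - p); last by ring.
  by rewrite mulNr mulrC => /eqP; rewrite -opprB eqr_opp => /eqP <-.
have -> : 1 - p = 'X * - c by rewrite mulrN -ep opprB.
by exists (- (- c) ^+ K); rewrite exprMn; ring.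
Qed.

Lemma eqmodX_inv_unique K e d e' d' c :
  eqmodX K (e * d) 1 -> eqmodX K (e' * d') 1 -> d' = d * c -> eqmodX K e (c * e').
Proof.
move=> ed ed' edc; subst d'.
apply: (@eqmodX_trans _ _ (e * (e' * (d * c)))).
  by rewrite -[e in eqmodX _ e]mulr1; exact/eqmodXMl/eqmodX_sym.
have -> : e * (e' * (d * c)) = (e * d) * (c * e') by ring.
by rewrite -[X in eqmodX _ _ X]mul1r; exact/eqmodXM/eqmodX_refl.
Qed.

Lemma eqmodX_telescope K k (a s : nat -> {poly R}) u c :
  eqmodX K (a 0%N + u * s 0%N) 1 ->
  (forall n, (n < k)%N -> eqmodX K (a n.+1 + u * s n.+1) (c * s n)) ->
  eqmodX K (c * s k) 0 ->
  eqmodX K (\sum_(n < k.+1) a n) (1 - (u - c) * \sum_(n < k.+1) s n).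
Proof.
move=> e0 eS etail.
have partial m : (m <= k)%N -> eqmodX K
    (\sum_(n < m.+1) a n + u * \sum_(n < m.+1) s n) (1 + c * \sum_(n < m) s n).
  elim: m => [|m IH] ltmk; first by rewrite !big_ord1 big_ord0 mulr0 addr0.
  rewrite (big_ord_recr m.+1 a) (big_ord_recr m.+1 s).
  rewrite [in X in eqmodX _ _ X]big_ord_recr /=.
  rewrite !mulrDr addrACA [in X in eqmodX _ _ X]addrA.
  exact: eqmodXD (IH (ltnW ltmk)) (eS m ltmk).
have -> : 1 - (u - c) * \sum_(n < k.+1) s n =
    1 + c * \sum_(n < k) s n + c * s k - u * \sum_(n < k.+1) s n.
  by rewrite big_ord_recr /=; ring.
rewrite -[X in eqmodX _ X](addrK (u * \sum_(n < k.+1) s n)).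
apply/eqmodXB/eqmodX_refl; rewrite -[X in eqmodX _ X]addr0.
exact: eqmodXD (partial k (leqnn k)) (eqmodX_sym etail).
Qed.

Variable sigma : {rmorphism {poly R} -> {poly R}}.
Hypothesis sigmaX : sigma 'X = 'X.

Lemma eqmodX_fixpoint_unique K (b c f g : {poly R}) :
  eqmodX K f (b + 'X * (c * sigma f)) -> eqmodX K g (b + 'X * (c * sigma g)) ->
  eqmodX K f g.
Proof.
move=> ef eg; suff: forall N, (N <= K)%N -> eqmodX N f g by apply.
elim=> [|N IH] leNK; first exact: eqmodX0.
apply: (eqmodX_trans (eqmodX_le leNK ef)); apply: eqmodX_sym.
apply: (eqmodX_trans (eqmodX_le leNK eg)); apply: eqmodX_sym.
apply: eqmodXD (eqmodX_refl _ _) _.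
exact/eqmodX_mulX/eqmodXMl/(eqmodX_rmorph sigmaX)/IH/ltnW.
Qed.

End CongruenceModXn.

Lemma zshift_coef_comm : commr_rmorph (intr : int -> ZzQ) (zv * qv ^+ 2).
Proof. by move=> a; rewrite /GRing.comm mulrC. Qed.

Definition zshift_coef := horner_morph zshift_coef_comm.

Lemma zshift_comm : commr_rmorph zshift_coef qv.
Proof. by move=> a; rewrite /GRing.comm mulrC. Qed.

Definition zshift : {rmorphism ZzQ -> ZzQ} := horner_morph zshift_comm.

Lemma zshift_q : zshift qv = qv.
Proof. exact: horner_morphX. Qed.

Lemma zshift_z : zshift zv = zv * qv ^+ 2.
Proof. by rewrite [LHS]horner_morphC; exact: horner_morphX. Qed.

Definition nu_funeq K (F : ZzQ) :=
  eqmodX K F (1 + qv * ((zv * qv - 1) * zshift F)).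

Definition poch_zq n := qpoch (zv * qv) (qv ^+ 2) n.

Lemma poch_zqS n : poch_zq n.+1 = (1 - zv * qv) * zshift (poch_zq n).
Proof.
rewrite /poch_zq /qpoch big_ord_recl rmorph_prod expr0 mulr1; congr (_ * _).
apply: eq_bigr => i _; rewrite rmorphB rmorph1 !rmorphM !rmorphXn.
by rewrite zshift_z zshift_q lift0 exprS; ring.
Qed.

Definition rhs_sum K := \sum_(n < K) poch_zq n * (- qv) ^+ n.

Lemma rhs_termS n : poch_zq n.+1 * (- qv) ^+ n.+1 =
  qv * ((zv * qv - 1) * zshift (poch_zq n * (- qv) ^+ n)).
Proof. by rewrite poch_zqS rmorphM rmorphXn rmorphN zshift_q exprS; ring. Qed.

Lemma rhs_sum_funeq K : nu_funeq K (rhs_sum K).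
Proof.
case: K => [|k]; first exact: eqmodX0.
rewrite /nu_funeq /rhs_sum rmorph_sum big_ord_recl.
rewrite [in X in eqmodX _ _ X]big_ord_recr /=.
under eq_bigr do rewrite rhs_termS.
have -> : poch_zq 0 = 1 by rewrite /poch_zq /qpoch big_ord0.
rewrite expr0 mulr1 -!mulr_sumr !mulrDr addrA -[X in eqmodX _ X]addr0.
apply: eqmodXD; first exact: eqmodX_refl.
(* What is left over is the (k+1)-th term, a multiple of (-q)^(k+1). *)
by rewrite -rhs_termS exprNn mulrA mulrC; exact/eqmodX_sym/eqmodX_mulXn.
Qed.

Definition poch_mq n := qpoch (- qv) (qv ^+ 2) n.

Definition inv_poch K n := inv_trunc K (poch_mq n.+1).

Definition nu1_term n := zv ^+ n * qv ^+ (n * n + n).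

Definition nu1_sum K := \sum_(n < K) nu1_term n * inv_poch K n.

Lemma poch_mq_eqmodX1 n : eqmodX 1 (poch_mq n) 1.
Proof.
have := @eqmodX_prod _ 1 n (fun i => 1 - - qv * (qv ^+ 2) ^+ i) (fun=> 1).
rewrite prodr_const expr1n; apply=> i.
by exists ((qv ^+ 2) ^+ i); rewrite expr1 /qv; ring.
Qed.

Lemma inv_poch_mul K n : eqmodX K (inv_poch K n * poch_mq n.+1) 1.
Proof. exact: eqmodX_inv (poch_mq_eqmodX1 _). Qed.

Lemma poch_mqS n : poch_mq n.+1 = poch_mq n * (1 + qv * (qv ^+ 2) ^+ n).
Proof. by rewrite /poch_mq /qpoch big_ord_recr /= mulNr opprK. Qed.

Lemma zshift_poch_mq n : zshift (poch_mq n) = poch_mq n.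
Proof.
rewrite rmorph_prod; apply: eq_bigr => i _.
by rewrite rmorphB rmorph1 rmorphM rmorphN !rmorphXn zshift_q.
Qed.

Lemma zshift_inv_poch K n : eqmodX K (zshift (inv_poch K n)) (inv_poch K n).
Proof.
have shifted : eqmodX K (zshift (inv_poch K n) * poch_mq n.+1) 1.
  rewrite -zshift_poch_mq -rmorphM -(rmorph1 zshift).
  exact: eqmodX_rmorph zshift_q (inv_poch_mul K n).
rewrite -[X in eqmodX _ _ X]mul1r.
exact: eqmodX_inv_unique shifted (inv_poch_mul K n) (esym (mulr1 _)).
Qed.

Lemma inv_pochS K n :
  eqmodX K (inv_poch K n) ((1 + qv * (qv ^+ 2) ^+ n.+1) * inv_poch K n.+1).
Proof.
exact: eqmodX_inv_unique (inv_poch_mul K n) (inv_poch_mul K n.+1) (poch_mqS n.+1).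
Qed.

Lemma zshift_nu1_term n : zshift (nu1_term n) = nu1_term n * (qv ^+ 2) ^+ n.
Proof. by rewrite /nu1_term rmorphM !rmorphXn zshift_z zshift_q exprMn; ring. Qed.

Lemma nu1_termS n : zv * qv ^+ 2 * (nu1_term n * (qv ^+ 2) ^+ n) = nu1_term n.+1.
Proof.
rewrite /nu1_term -exprM.
rewrite (_ : (n.+1 * n.+1 + n.+1 = n * n + n + 2 * n + 2)%N); last by lia.
by rewrite !exprD !exprS; ring.
Qed.

Lemma zshift_nu1_summand K n :
  eqmodX K (zshift (nu1_term n * inv_poch K n))
           (nu1_term n * (qv ^+ 2) ^+ n * inv_poch K n).
Proof. by rewrite rmorphM zshift_nu1_term; exact/eqmodXMl/zshift_inv_poch. Qed.

Lemma nu1_funeq_head K :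
  eqmodX K (nu1_term 0 * inv_poch K 0
            + qv * zshift (nu1_term 0 * inv_poch K 0)) 1.
Proof.
have -> : nu1_term 0 = 1 by rewrite /nu1_term !expr0 mulr1.
rewrite mul1r; apply: eqmodX_trans (inv_poch_mul K 0).
rewrite poch_mqS /poch_mq /qpoch big_ord0 expr0 mul1r mulr1.
rewrite mulrDr mulr1 [_ * qv]mulrC.
by apply: eqmodXD; [exact: eqmodX_refl | exact/eqmodXMl/zshift_inv_poch].
Qed.

Lemma nu1_funeq_step K n :
  eqmodX K (nu1_term n.+1 * inv_poch K n.+1
            + qv * zshift (nu1_term n.+1 * inv_poch K n.+1))
           (zv * qv ^+ 2 * zshift (nu1_term n * inv_poch K n)).
Proof.
apply: (@eqmodX_trans _ _ _ (nu1_term n.+1 * inv_poch K n)).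
  apply: (@eqmodX_trans _ _ _
    (nu1_term n.+1 * ((1 + qv * (qv ^+ 2) ^+ n.+1) * inv_poch K n.+1)));
    last exact/eqmodXMl/eqmodX_sym/inv_pochS.
  rewrite [X in eqmodX _ _ X](_ : _ = nu1_term n.+1 * inv_poch K n.+1 +
      qv * (nu1_term n.+1 * (qv ^+ 2) ^+ n.+1 * inv_poch K n.+1)); last by ring.
  by apply: eqmodXD; [exact: eqmodX_refl | exact/eqmodXMl/zshift_nu1_summand].
rewrite -nu1_termS -mulrA; exact/eqmodX_sym/eqmodXMl/zshift_nu1_summand.
Qed.

Lemma nu1_funeq_tail k :
  eqmodX k.+1 (zv * qv ^+ 2 * zshift (nu1_term k * inv_poch k.+1 k)) 0.
Proof.
rewrite rmorphM zshift_nu1_term mulrA nu1_termS.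
rewrite /nu1_term addnC exprD mulrCA -mulrA.
exact: eqmodX_mulXn.
Qed.

Lemma nu1_sum_funeq K : nu_funeq K (nu1_sum K).
Proof.
case: K => [|k]; first exact: eqmodX0.
pose a n := nu1_term n * inv_poch k.+1 n.
rewrite /nu_funeq /nu1_sum rmorph_sum.
rewrite (_ : 1 + _ = 1 - (qv - zv * qv ^+ 2) * \sum_(n < k.+1) zshift (a n));
  last by ring.
apply: (eqmodX_telescope (a := a) (s := fun n => zshift (a n))).
- exact: nu1_funeq_head.
- by move=> n _; exact: nu1_funeq_step.
- exact: nu1_funeq_tail.
Qed.

Theorem theorem1p2 : forall N : nat, nu1_trunc N = rhs_trunc N.
Proof.
move=> N; change (trunc N (nu1_sum N) = trunc N (rhs_sum N)).
apply: take_poly_eqmodX.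
exact: (eqmodX_fixpoint_unique (sigma := zshift) zshift_q)
  (nu1_sum_funeq N) (rhs_sum_funeq N).
Qed.
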